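(* For every $\varepsilon\in(0,1/2)$ there exist $\delta=\delta_\varepsilon>0$ and an integer $N_{\varepsilon,\delta}$ such that for every integer $N\ge N_{\varepsilon,\delta}$ there is a set $\mathcal E(N)\subset\{0,1\}^N$ with $\#\mathcal E(N)\le \varepsilon\, 2^N$ such that for every $\mathfrak u\in\{0,1\}^N\setminus\mathcal E(N)$ and every integer $0\le k\le\lfloor\delta N\rfloor$ one has $R_{\mathfrak w}(k)\in[1/2-\varepsilon,1/2+\varepsilon]$ and $R_{\mathfrak e}(k)\in[1/2-\varepsilon,1/2+\varepsilon]$, where these proportions are computed in the P-G triangle of side $N$ generated by $\mathfrak u$.
   Context: For $\mathfrak u=(a_0,\dots,a_{N-1})\in\{0,1\}^N$, the P-G triangle of side $N$ generated by $\mathfrak u$ consists of the numbers $d_i^{(j)}\in\{0,1\}$, $j\ge0$, $0\le i\le N-1-j$, with $d_i^{(0)}=a_i$ and $d_i^{(j+1)}=|d_{i+1}^{(j)}-d_i^{(j)}|$. For $0\le k\le N-1$, the western ray $\mathfrak w_k$ is the sequence $(d_k^{(j)})_{0\le j\le N-1-k}$ and the eastern ray $\mathfrak e_k$ is the sequence $(d_{N-1-k-j}^{(j)})_{0\le j\le N-1-k}$, each of length $N-k$. $R_{\mathfrak w}(k)=\frac{1}{N-k}\#\{0\le j\le N-1-k: d_k^{(j)}=1\}$ and $R_{\mathfrak e}(k)=\frac{1}{N-k}\#\{0\le j\le N-1-k: d_{N-1-k-j}^{(j)}=1\}$ are the proportions of ones on $\mathfrak w_k$ and $\mathfrak e_k$.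 *)

From mathcomp Require Import all_boot all_order all_algebra.
From mathcomp Require Import reals.
Set Implicit Arguments. Unset Strict Implicit. Unset Printing Implicit Defensive.
Import Order.TTheory GRing.Theory Num.Theory.

(* Steinhaus / Pascal-Gauss (P-G) triangle generated by u in {0,1}^N, booleans
   encode {0,1} (true = 1).  pg u j i = d_i^{(j)}; the recursion
   d_i^{(j+1)} = |d_{i+1}^{(j)} - d_i^{(j)}| is xor on {0,1}.
   Values outside the triangle (i > N-1-j) are irrelevant; only the
   entries inside the triangle are used below. *)
Fixpoint pg (N : nat) (u : {ffun 'I_N -> bool}) (j i : nat) : bool :=
  match j with
  | 0 => if insub i is Some i' then u i' else false
  | j'.+1 => xorb (pg u j' i.+1) (pg u j' i)
  end.

Definition west_ones (N : nat) (u : {ffun 'I_N -> bool}) (k : nat) : nat :=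
  \sum_(0 <= j < N - k) (pg u j k : nat).

Definition east_ones (N : nat) (u : {ffun 'I_N -> bool}) (k : nat) : nat :=
  \sum_(0 <= j < N - k) (pg u j (N - 1 - k - j) : nat).

Local Open Scope ring_scope.

Definition R_west (R : realType) (N : nat) (u : {ffun 'I_N -> bool}) (k : nat) : R :=
  (west_ones u k)%:R / (N - k)%:R.
Definition R_east (R : realType) (N : nat) (u : {ffun 'I_N -> bool}) (k : nat) : R :=
  (east_ones u k)%:R / (N - k)%:R.

From mathcomp Require Import all_boot all_order all_algebra.
From mathcomp Require Import reals.
From mathcomp Require Import ring lra zify.
Import Order.TTheory GRing.Theory Num.Theory.
Set Implicit Arguments. Unset Strict Implicit. Unset Printing Implicit Defensive.

(* Proof by the second moment method.  Let S(u) = sum_j (-1)^(d_j) be the signed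
   sum along a ray of length L = N - k; its proportion of ones lies within eps
   of 1/2 iff |S(u)| <= 2 eps L.  The triangle is GF(2)-linear in the row u, and
   a single one at position p spreads inside the cone bounded by the
   anti-diagonal i + j = p and the column i = p.  Hence flipping a suitable bit
   of u reverses the j-th entry of a ray while fixing all entries above it, so
   the signs along a ray are orthonormal on {0,1}^N and sum_u S(u)^2 = L 2^N.
   Chebyshev's inequality bounds the rows on which one ray deviates by
   2^N / (4 eps^2 L); a union bound over the rays with k <= D = delta N, all of
   length at least N / 2, leaves at most (D + 1) 2^N / (eps^2 N) exceptional
   rows, which is at most eps 2^N for delta = eps^3 / 2 and N >= 2 / eps^3. *)

Definition xorf N (u v : {ffun 'I_N -> bool}) : {ffun 'I_N -> bool} :=
  [ffun i => xorb (u i) (v i)].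

Lemma pg_xor N (u v : {ffun 'I_N -> bool}) j i :
  pg (xorf u v) j i = xorb (pg u j i) (pg v j i).
Proof.
elim: j i => [|j IH] i /=; first by case: insubP => // i' _ _; rewrite ffunE.
by rewrite !IH; case: (pg u j i.+1); case: (pg v j i.+1); case: (pg u j i); case: (pg v j i).
Qed.

Definition dirac N (p : nat) : {ffun 'I_N -> bool} := [ffun i => val i == p].

Definition flip N (p : nat) (u : {ffun 'I_N -> bool}) := xorf u (dirac N p).

Lemma flipK N p : involutive (@flip N p).
Proof. by move=> u; apply/ffunP => i; rewrite !ffunE; case: (u i); case: (_ == p). Qed.

Lemma pg_dirac_left N p j i : (i + j < p)%N -> pg (dirac N p) j i = false.
Proof.
elim: j i => [|j IH] i /=; last by move=> ?; rewrite !IH //; lia.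
by rewrite addn0; case: insubP => // i' _ <- ?; rewrite ffunE ltn_eqF.
Qed.

Lemma pg_dirac_right N p j i : (p < i)%N -> pg (dirac N p) j i = false.
Proof.
elim: j i => [|j IH] i /=; last by move=> ?; rewrite !IH //; lia.
by case: insubP => // i' _ <- ?; rewrite ffunE gtn_eqF.
Qed.

Lemma pg_dirac_antidiag N p j i : (p < N)%N -> (i + j = p)%N -> pg (dirac N p) j i.
Proof.
move=> pN; elim: j i => [|j IH] i /=; last first.
  by move=> ?; rewrite IH ?pg_dirac_left //; lia.
rewrite addn0 => ->; case: insubP => [i' _ <-|]; first by rewrite ffunE.
by rewrite pN.
Qed.

Lemma pg_dirac_column N p j : (p < N)%N -> pg (dirac N p) j p.
Proof.
move=> pN; elim: j => [|j IH] /=; last by rewrite IH pg_dirac_right.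
by case: insubP => [i' _ <-|]; [rewrite ffunE | rewrite pN].
Qed.

Local Open Scope ring_scope.

Lemma sum_odd_involution (R : numDomainType) (T : finType) (f : T -> T) (g : T -> R) :
  involutive f -> (forall u, g (f u) = - g u) -> \sum_u g u = 0.
Proof.
move=> fK g_odd; have sumN : \sum_u g u = - \sum_u g u.
  by rewrite {1}(reindex_inj (can_inj fK)) /= -sumrN; apply: eq_bigr => u _; apply: g_odd.
have : (\sum_u g u) *+ 2 == 0 by rewrite mulr2n {2}sumN subrr.
by rewrite mulrn_eq0 => /eqP.
Qed.

(* Walsh-type orthogonality: if each sign (-1)^(x_j) can be reversed by an
   involution preserving all the earlier signs, then the signs are orthonormal
   and the signed sum of L of them has second moment L |T|. *)
Lemma second_moment_signed_sum (R : numDomainType) (T : finType)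
    (x : nat -> T -> bool) (f : nat -> T -> T) (L : nat) :
  (forall j, involutive (f j)) ->
  (forall j u, (j < L)%N -> x j (f j u) = ~~ x j u) ->
  (forall j j' u, (j' < j < L)%N -> x j' (f j u) = x j' u) ->
  \sum_u (\sum_(0 <= j < L) (-1) ^+ x j u) ^+ 2 = L%:R * #|T|%:R :> R.
Proof.
move=> fK; elim: L => [|L IH] x_flip x_keep.
  by rewrite big1 ?mul0r // => u _; rewrite big_geq // expr0n.
have orth : \sum_u (\sum_(0 <= j < L) (-1) ^+ x j u) * (-1) ^+ x L u = 0 :> R.
  apply: (sum_odd_involution (fK L)) => u.
  rewrite x_flip // signrN mulrN; congr (- (_ * _)).
  by apply: eq_big_nat => j /andP[_ jL]; rewrite x_keep // jL ltnSn.
under eq_bigr do rewrite big_nat_recr //= sqrrD sqrr_sign.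
rewrite !big_split /= orth !addr0 IH; last 2 first.
- by move=> j u jL; rewrite x_flip // ltnW.
- by move=> j j' u /andP[? ?]; rewrite x_keep // (ltn_trans _ (ltnSn L)) ?andbT.
by rewrite sumr_const -addn1 natrD mulrDl mul1r.
Qed.

Section Counting.
Variable R : realFieldType.

Definition deviant (T : finType) (S : T -> R) (c : R) : {set T} := [set u | c < `|S u|].

Lemma card_deviant (T : finType) (S : T -> R) (c : R) : 0 <= c ->
  #|deviant S c|%:R * c ^+ 2 <= \sum_u S u ^+ 2.
Proof.
move=> c_ge0; rewrite (bigID (mem (deviant S c))) /= -[X in X <= _]addr0.
apply: lerD; last by apply: sumr_ge0 => u _; apply: sqr_ge0.
rewrite mulr_natl -sumr_const; apply: ler_sum => u; rewrite inE => c_lt.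
by rewrite -(real_normK (num_real (S u))); nra.
Qed.

Lemma card_deviant_moment (T : finType) (S : T -> R) (eps L X : R) :
  0 < eps -> 0 < L -> \sum_u S u ^+ 2 = L * X ->
  #|deviant S (2 * eps * L)|%:R * (4 * eps ^+ 2 * L) <= X.
Proof.
move=> eps_gt0 L_gt0 moment.
have c_ge0 : 0 <= 2 * eps * L by rewrite ltW // !mulr_gt0.
have := card_deviant S c_ge0; rewrite moment.
have -> : #|deviant S (2 * eps * L)|%:R * (2 * eps * L) ^+ 2 =
  L * (#|deviant S (2 * eps * L)|%:R * (4 * eps ^+ 2 * L)) by ring.
by rewrite ler_pM2l.
Qed.

Lemma card_bigcup_le (I T : finType) (P : pred I) (F : I -> {set T}) :
  (#|\bigcup_(i | P i) F i| <= \sum_(i | P i) #|F i|)%N.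
Proof.
apply: (big_ind2 (fun (A : {set T}) n => #|A| <= n)%N) => [|A m B n hA hB|i _].
- by rewrite cards0.
- by rewrite (leq_trans (leq_card_setU A B)) ?leq_add.
- exact: leqnn.
Qed.

Lemma count_below (D : R) (n : nat) : 0 <= D -> \sum_(k < n | k%:R <= D) 1 <= D + 1.
Proof.
move=> D_ge0; rewrite big_mkcond; elim: n => [|n IH]; first by rewrite big_ord0; lra.
rewrite big_ord_recr /=; case: ifP => [n_le|_]; last by rewrite addr0.
have le_n : \sum_(k < n) (if k%:R <= D then 1 else 0) <= n%:R :> R.
  rewrite -[n in n%:R]card_ord -sumr_const.
  by apply: ler_sum => k _; case: ifP => _; lra.
lra.
Qed.

Lemma ratio_in_window (w L eps : R) : 0 < L -> `|L - 2 * w| <= 2 * eps * L ->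
  1 / 2 - eps <= w / L <= 1 / 2 + eps.
Proof.
move=> L_gt0; rewrite ler_norml => /andP[lo hi].
by rewrite ler_pdivlMr // ler_pdivrMr //; apply/andP; split; nra.
Qed.

End Counting.

Section Rays.
Variable R : realType.

Definition west_sign N (u : {ffun 'I_N -> bool}) (k : nat) : R :=
  \sum_(0 <= j < N - k) (-1) ^+ pg u j k.
Definition east_sign N (u : {ffun 'I_N -> bool}) (k : nat) : R :=
  \sum_(0 <= j < N - k) (-1) ^+ pg u j (N - 1 - k - j).

Lemma signed_sum_ones (b : nat -> bool) (L : nat) :
  \sum_(0 <= j < L) (-1) ^+ b j = L%:R - 2 * (\sum_(0 <= j < L) (b j : nat))%:R :> R.
Proof.
elim: L => [|L IH]; first by rewrite !big_geq // mulr0 subr0.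
by rewrite !big_nat_recr //= IH natrD -addn1 natrD; case: (b L) => /=; lra.
Qed.

Lemma card_configurations N : #|{ffun 'I_N -> bool}|%:R = 2 ^+ N :> R.
Proof. by rewrite card_ffun card_bool card_ord natrX. Qed.

(* Along the western ray w_k, flipping bit k + j reverses d_k^(j) and leaves
   the entries above it unchanged: the signs are orthonormal. *)
Lemma west_second_moment N k :
  \sum_(u : {ffun 'I_N -> bool}) west_sign u k ^+ 2 = (N - k)%:R * 2 ^+ N.
Proof.
rewrite -card_configurations; apply: (@second_moment_signed_sum R _
  (fun j u => pg u j k) (fun j => flip (k + j))).
- by move=> j; apply: flipK.
- by move=> j u jL; rewrite pg_xor pg_dirac_antidiag //; lia.
- by move=> j j' u jj; rewrite pg_xor pg_dirac_left //; lia.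
Qed.

(* Along the eastern ray e_k, flipping bit N-1-k-j reverses d_{N-1-k-j}^(j) and
   leaves the entries above it unchanged. *)
Lemma east_second_moment N k :
  \sum_(u : {ffun 'I_N -> bool}) east_sign u k ^+ 2 = (N - k)%:R * 2 ^+ N.
Proof.
rewrite -card_configurations; apply: (@second_moment_signed_sum R _
  (fun j u => pg u j (N - 1 - k - j)) (fun j => flip (N - 1 - k - j))).
- by move=> j; apply: flipK.
- by move=> j u jL; rewrite pg_xor pg_dirac_column //; lia.
- by move=> j j' u jj; rewrite pg_xor pg_dirac_right //; lia.
Qed.

Lemma west_sign_ones N (u : {ffun 'I_N -> bool}) k :
  west_sign u k = (N - k)%:R - 2 * (west_ones u k)%:R.
Proof. exact: signed_sum_ones. Qed.

Lemma east_sign_ones N (u : {ffun 'I_N -> bool}) k :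
  east_sign u k = (N - k)%:R - 2 * (east_ones u k)%:R.
Proof. exact: signed_sum_ones. Qed.

Definition west_deviant (eps : R) N k : {set {ffun 'I_N -> bool}} :=
  deviant (fun u => west_sign u k) (2 * eps * (N - k)%:R).
Definition east_deviant (eps : R) N k : {set {ffun 'I_N -> bool}} :=
  deviant (fun u => east_sign u k) (2 * eps * (N - k)%:R).

Lemma card_west_deviant (eps : R) N k : 0 < eps -> (k < N)%N ->
  #|west_deviant eps N k|%:R * (4 * eps ^+ 2 * (N - k)%:R) <= 2 ^+ N.
Proof.
by move=> eps_gt0 kN; apply: card_deviant_moment (west_second_moment N k); rewrite // ltr0n subn_gt0.
Qed.

Lemma card_east_deviant (eps : R) N k : 0 < eps -> (k < N)%N ->
  #|east_deviant eps N k|%:R * (4 * eps ^+ 2 * (N - k)%:R) <= 2 ^+ N.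
Proof.
by move=> eps_gt0 kN; apply: card_deviant_moment (east_second_moment N k); rewrite // ltr0n subn_gt0.
Qed.

Definition exceptional (eps D : R) N : {set {ffun 'I_N -> bool}} :=
  \bigcup_(k < N | k%:R <= D)
    (west_deviant eps N k :|: east_deviant eps N k).

Lemma window_outside_exceptional (eps D : R) N (u : {ffun 'I_N -> bool}) k :
  u \notin exceptional eps D N -> (k < N)%N -> k%:R <= D ->
  (1 / 2 - eps <= R_west R u k <= 1 / 2 + eps) /\
  (1 / 2 - eps <= R_east R u k <= 1 / 2 + eps).
Proof.
move=> u_reg kN k_le; have L_gt0 : 0 < (N - k)%:R :> R by rewrite ltr0n subn_gt0.
have : u \notin west_deviant eps N k :|: east_deviant eps N k.
  by apply: contra u_reg => dev; apply/bigcupP; exists (Ordinal kN).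
rewrite !inE negb_or -!leNgt => /andP[west_ok east_ok].
by split; apply: ratio_in_window; rewrite // -?west_sign_ones -?east_sign_ones.
Qed.

(* Union bound over the 2(D + 1) rays with k <= D, each of length at least
   N / 2, combined with the second moment of every ray. *)
Lemma card_exceptional (eps D : R) N : 0 < eps -> 0 <= D -> 2 * D <= N%:R ->
  #|exceptional eps D N|%:R * (eps ^+ 2 * N%:R) <= (D + 1) * 2 ^+ N.
Proof.
move=> eps_gt0 D_ge0 D_le.
pose W (k : 'I_N) := west_deviant eps N k.
pose E (k : 'I_N) := east_deviant eps N k.
have per_ray (k : 'I_N) : k%:R <= D -> (#|W k| + #|E k|)%:R * (eps ^+ 2 * N%:R) <= 2 ^+ N :> R.
  move=> k_le; have kN : (k <= N)%N := ltnW (ltn_ord k).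
  have long : N%:R <= 2 * (N - k)%:R :> R by rewrite natrB //; lra.
  have := card_west_deviant eps_gt0 (ltn_ord k).
  have := card_east_deviant eps_gt0 (ltn_ord k).
  rewrite -/(W k) -/(E k) natrD.
  have : (#|W k|%:R + #|E k|%:R) * (eps ^+ 2 * N%:R) <=
         (#|W k|%:R + #|E k|%:R) * (eps ^+ 2 * (2 * (N - k)%:R)) :> R.
    by rewrite ler_wpM2l ?addr_ge0 ?ler_wpM2l ?sqr_ge0.
  lra.
have card_le : (#|exceptional eps D N| <= \sum_(k < N | (k%:R <= D)%R) (#|W k| + #|E k|))%N.
  apply: leq_trans (card_bigcup_le _ _) _; apply: leq_sum => k _.
  exact: leq_card_setU.
have sum_le : \sum_(k < N | k%:R <= D) (#|W k| + #|E k|)%:R * (eps ^+ 2 * N%:R)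
    <= (\sum_(k < N | k%:R <= D) 1) * 2 ^+ N.
  by rewrite mulr_suml; apply: ler_sum => k k_le; rewrite mul1r per_ray.
apply: le_trans (le_trans _ sum_le) _.
  by rewrite -mulr_suml -natr_sum ler_wpM2r ?ler_nat // mulr_ge0 ?sqr_ge0.
by rewrite ler_wpM2r ?exprn_ge0 ?count_below.
Qed.

End Rays.

Theorem theorem2p5 (R : realType) (eps : R) :
  0 < eps -> eps < 1 / 2 ->
  exists delta : R, 0 < delta /\
  exists N0 : nat, forall N : nat, (N0 <= N)%N ->
  exists E : {set {ffun 'I_N -> bool}},
    (#|E|%:R <= eps * 2 ^+ N) /\
    forall u : {ffun 'I_N -> bool}, u \notin E ->
    forall k : nat, (k < N)%N -> (k%:R <= delta * N%:R) ->
      (1 / 2 - eps <= R_west R u k <= 1 / 2 + eps) /\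
      (1 / 2 - eps <= R_east R u k <= 1 / 2 + eps).
Proof.
move=> eps_gt0 eps_lt_half.
have eps3_gt0 : 0 < eps ^+ 3 by rewrite exprn_gt0.
have eps3_le1 : eps ^+ 3 <= 1 by rewrite exprn_ile1 // ?ltW //; lra.
have [N0 N0_large] : exists N0 : nat, 2 / eps ^+ 3 <= N0%:R.
  exists (Num.Def.archi_bound (2 / eps ^+ 3)); apply/ltW/archi_boundP.
  by rewrite divr_ge0 ?ltW.
exists (eps ^+ 3 / 2); split; first by rewrite divr_gt0.
exists N0 => N N_ge; pose D := eps ^+ 3 / 2 * N%:R.
have N_large : 2 <= eps ^+ 3 * N%:R.
  by rewrite -ler_pdivrMl // mulrC (le_trans N0_large) ?ler_nat.
have N_gt0 : 0 < N%:R :> R by nra.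
exists (exceptional eps D N); split; last first.
  by move=> u u_reg k kN k_le; apply: window_outside_exceptional u_reg kN k_le.
have D_ge0 : 0 <= D by rewrite mulr_ge0 ?ler0n // divr_ge0 ?ltW.
have D_le : 2 * D <= N%:R by rewrite /D; nra.
have card_E := card_exceptional eps_gt0 D_ge0 D_le.
rewrite -(@ler_pM2r _ (eps ^+ 2 * N%:R)) ?mulr_gt0 ?exprn_gt0 //.
apply: le_trans card_E _.
have -> : eps * 2 ^+ N * (eps ^+ 2 * N%:R) = eps ^+ 3 * N%:R * 2 ^+ N by ring.
by rewrite ler_wpM2r ?exprn_ge0 // /D; lra.
Qed.
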